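(* Let $N$ be an absolute prime with $n\ge 2$ decimal digits. Then either $N=A_n$ is a repunit, or there exist distinct digits $a,b\in\{1,3,7,9\}$ such that $N$ is obtained by a permutation of the digits of $B_n(a,b)$; equivalently, exactly $n-1$ of the digits of $N$ equal $a$ and the remaining one equals $b$.
   Context: For a positive integer $N$ with decimal representation $d_1d_2\dots d_n$ (digits $d_k\in\{0,\dots,9\}$, $d_1\neq 0$), a permutation of the digits of $N$ is any integer $\sum_{k=1}^{n} d_{\sigma(k)}10^{n-k}$ with $\sigma$ a permutation of $\{1,\dots,n\}$. $N$ is called an absolute prime if every integer obtained by a permutation of the digits of $N$ (including $N$ itself) is prime. The repunit $A_n=(10^n-1)/9$ is the $n$-digit integer all of whose digits are $1$. For digits $a,b$ and $n\ge 1$, $B_n(a,b)=a\cdot A_n+(b-a)$ is the $n$-digit integer whose first $n-1$ digits are $a$ and whose last digit is $b$. *)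

From mathcomp Require Import all_boot.
Set Implicit Arguments. Unset Strict Implicit. Unset Printing Implicit Defensive.

Fixpoint rev_digits_aux (fuel n : nat) : seq nat :=
  match fuel with
  | 0 => [::]
  | f.+1 => if n == 0 then [::] else (n %% 10) :: rev_digits_aux f (n %/ 10)
  end.

(* decimal representation d_1 d_2 ... d_n of n (most significant first);
   digits 0 = [::] *)
Definition digits (n : nat) : seq nat := rev (rev_digits_aux n n).

Definition digits_value (s : seq nat) : nat := foldl (fun acc d => acc * 10 + d) 0 s.

Definition absolute_prime (N : nat) : Prop :=
  0 < N /\ forall t : seq nat, perm_eq t (digits N) -> prime (digits_value t).

Definition repunit (n : nat) : nat := (10 ^ n - 1) %/ 9.

(* B_n(a,b) = a * A_n + (b - a), written in nat as a*A_n - a + b (n >= 1) *)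
Definition Bn (n a b : nat) : nat := a * repunit n - a + b.

(* A non-unit last digit [x] shares the factor [gcdn x 10] with the whole number,
   so all digits of an absolute prime with at least two digits lie in
   {1, 3, 7, 9}.  As 10 ^ 6 = 1 modulo 7 and modulo 13, a multiplicity of a digit
   matters exactly below 6 and only modulo 6 above.  For each of the finitely
   many resulting digit patterns other than the repunits and a...ab, a
   computation exhibits a permutation divisible by 3, 7 or 13 and larger than
   that prime: either at most five of the digits can be arranged to reach every
   residue modulo 7, whatever precedes them, or the digits outside a block of
   repeated ones can be arranged to cancel the residue of that block. *)

From mathcomp Require Import all_boot zify.
Set Implicit Arguments. Unset Strict Implicit. Unset Printing Implicit Defensive.

Lemma digits_value_rcons s d : digits_value (rcons s d) = digits_value s * 10 + d.
Proof. exact: foldl_rcons. Qed.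

Lemma digits_value_cat r t :
  digits_value (r ++ t) = digits_value r * 10 ^ size t + digits_value t.
Proof.
elim/last_ind: t => [|t d IH]; first by rewrite cats0 muln1 addn0.
rewrite -rcons_cat !digits_value_rcons IH size_rcons expnS; nia.
Qed.

Lemma digits_value_ge s : 0 < head 0 s -> 10 ^ (size s).-1 <= digits_value s.
Proof.
case: s => [|x s] //= x_gt0.
rewrite -cat1s digits_value_cat /digits_value /=; nia.
Qed.

Lemma digits_value_eq0 s : (digits_value s == 0) = all (pred1 0) s.
Proof.
elim/last_ind: s => [|s d IH] //.
by rewrite digits_value_rcons all_rcons -IH addn_eq0 muln_eq0 orbF andbC.
Qed.

Lemma repunit_nseq n : repunit n = digits_value (nseq n 1).
Proof.
have value9 : (digits_value (nseq n 1)) * 9 + 1 = 10 ^ n.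
  elim: n => [|n IH] //; rewrite -[n.+1]addn1 nseqD cats1 digits_value_rcons expnD.
  lia.
by rewrite /repunit -value9 addnK mulnK.
Qed.

Lemma repunitS n : repunit n.+1 = repunit n * 10 + 1.
Proof. by rewrite !repunit_nseq -[n.+1]addn1 nseqD cats1 digits_value_rcons. Qed.

Lemma digits_value_nseq n a : digits_value (nseq n a) = a * repunit n.
Proof.
elim: n => [|n IH]; first by rewrite repunit_nseq muln0.
rewrite repunitS -[n.+1]addn1 nseqD cats1 digits_value_rcons IH; lia.
Qed.

Lemma rev_digits_auxK f n : n <= f -> digits_value (rev (rev_digits_aux f n)) = n.
Proof.
elim: f n => [|f IH] n n_le /=; first by case: n n_le.
case: eqP => [-> //|n_neq0].
rewrite rev_cons digits_value_rcons IH; first by rewrite [RHS](divn_eq n 10).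
lia.
Qed.

Lemma rev_digits_aux_lt10 f n : all (fun d => d < 10) (rev_digits_aux f n).
Proof. by elim: f n => [|f IH] n //=; case: eqP => //= _; rewrite ltn_pmod ?IH. Qed.

Lemma digitsK : cancel digits digits_value.
Proof. by move=> n; apply: rev_digits_auxK. Qed.

Lemma digits_lt10 n : all (fun d => d < 10) (digits n).
Proof. by rewrite /digits all_rev rev_digits_aux_lt10. Qed.

Lemma rev_digits_aux_value f s : all (fun d => d < 10) s -> 0 < head 1 s ->
  digits_value s <= f -> rev_digits_aux f (digits_value s) = rev s.
Proof.
elim/last_ind: s f => [|s d IH] f; first by case: f.
rewrite all_rcons digits_value_rcons rev_rcons => /andP[d_lt10 s_lt10] head_gt0.
have head_s : 0 < head 1 s by case: s head_gt0 {IH s_lt10}.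
have value_gt0 : 0 < digits_value s * 10 + d.
  case: s head_gt0 {IH s_lt10 head_s} => [|x s] /=; first lia.
  have := @digits_value_ge (x :: s); rewrite /= /digits_value /=; lia.
case: f => [|f] value_le /=; first lia.
rewrite ifN; last lia.
rewrite modnMDl modn_small // divnMDl // divn_small // addn0 IH //; lia.
Qed.

Lemma digits_valueK s : all (fun d => d < 10) s -> 0 < head 0 s ->
  digits (digits_value s) = s.
Proof.
case: s => [|x s] // s_lt10 x_gt0.
by rewrite /digits rev_digits_aux_value ?revK.
Qed.

Lemma digits_Bn n a b : 0 < a < 10 -> 0 < b < 10 -> 0 < n ->
  digits (Bn n a b) = rcons (nseq n.-1 a) b.
Proof.
case: n => // n a_digit b_digit _.
have -> : Bn n.+1 a b = digits_value (rcons (nseq n a) b).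
  by rewrite /Bn digits_value_rcons digits_value_nseq repunitS; lia.
apply: digits_valueK; first by rewrite all_rcons all_nseq; lia.
by case: n => /=; lia.
Qed.

Definition horner_mod p u (t : seq nat) := foldl (fun a d => (a * 10 + d) %% p) u t.

Lemma horner_modE p u t :
  horner_mod p (u %% p) t = (u * 10 ^ size t + digits_value t) %% p.
Proof.
elim/last_ind: t => [|t d IH]; first by rewrite muln1 addn0.
rewrite /horner_mod foldl_rcons -/(horner_mod _ _ _) IH digits_value_rcons size_rcons.
by rewrite -modnDml modnMml modnDml expnS; congr (_ %% p); nia.
Qed.

Lemma digits_value_cat_mod p r t :
  digits_value (r ++ t) %% p = horner_mod p (digits_value r %% p) t.
Proof. by rewrite horner_modE digits_value_cat. Qed.

Definition rep_residue p k d := horner_mod p 0 (nseq k d).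

Definition period_residues p k d := [seq rep_residue p i d | i <- iota 0 k].

Lemma rep_residueE p k d : rep_residue p k d = digits_value (nseq k d) %% p.
Proof. by rewrite /rep_residue -(mod0n p) horner_modE. Qed.

Lemma rep_residue_period p k d L : 0 < k -> rep_residue p k d = 0 ->
  rep_residue p L d \in period_residues p k d.
Proof.
move=> k_gt0 period_k; apply/mapP; exists (L %% k); first by rewrite mem_iota ltn_pmod.
rewrite {1}(divn_eq L k) /rep_residue nseqD /horner_mod foldl_cat -/(horner_mod _ _ _).
congr horner_mod; elim: (L %/ k) => // q IH.
rewrite mulSn nseqD /horner_mod foldl_cat -!/(horner_mod _ _ _).
by rewrite -/(rep_residue p k d) period_k.
Qed.

Definition perm_prime (s : seq nat) :=
  forall t, perm_eq t s -> prime (digits_value t).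

Definition covers p (U m : seq nat) :=
  all (fun u => has (fun t => horner_mod p u t == 0) (permutations m)) U.

Lemma perm_prime_cover p (s r m U : seq nat) : 1 < p -> perm_prime s ->
  all (fun d => 0 < d) s -> p < 10 ^ (size s).-1 ->
  perm_eq s (r ++ m) -> digits_value r %% p \in U -> covers p U m -> False.
Proof.
move=> p_gt1 s_prime s_pos p_small s_rm r_U m_covers.
have [t m_t rt_mod] : exists2 t : seq nat,
    perm_eq t m & horner_mod p (digits_value r %% p) t = 0.
  move/allP/(_ _ r_U)/hasP: m_covers => [t]; rewrite mem_permutations => m_t /eqP.
  by exists t.
have s_rt : perm_eq (r ++ t) s by rewrite perm_sym (perm_trans s_rm) // perm_cat2l perm_sym.
have rt_prime : prime (digits_value (r ++ t)) by apply: s_prime.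
have p_dvd : p %| digits_value (r ++ t) by rewrite /dvdn digits_value_cat_mod rt_mod.
have p_eq : p = digits_value (r ++ t).
  by apply/(prime_nt_dvdP rt_prime) => //; rewrite neq_ltn p_gt1 orbT.
have size_rt : size (r ++ t) = size s by apply: perm_size.
have rt_pos : all (fun d => 0 < d) (r ++ t) by rewrite (perm_all _ s_rt).
have rt_head : 0 < head 0 (r ++ t).
  case: (r ++ t) size_rt rt_pos => [/= s0 _|x ? _ /andP[] //].
  by move: p_small; rewrite -s0 expn0; lia.
have := digits_value_ge rt_head; rewrite size_rt; lia.
Qed.

Definition unit_digits : seq nat := [:: 1; 3; 7; 9].

Lemma unit_digitsE d : d < 10 -> (d \in unit_digits) = coprime d 10.
Proof.
have units10 : all (fun d => (d \in unit_digits) == coprime d 10) (iota 0 10) by [].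
by move=> d_lt10; apply/eqP/(allP units10); rewrite mem_iota.
Qed.

Lemma perm_prime_unit_digits s : perm_prime s -> all (fun d => d < 10) s ->
  2 <= size s -> all (mem unit_digits) s.
Proof.
move=> s_prime s_lt10 s_ge2.
have rest_zero x : x \in s -> ~~ coprime x 10 -> all (pred1 0) (rem x s) /\ 0 < x.
  move=> s_x x_ncop; set w := digits_value (rem x s).
  have P_prime : prime (w * 10 + x).
    by rewrite -digits_value_rcons; apply: s_prime; rewrite perm_rcons perm_sym perm_to_rem.
  have g_eq : gcdn x 10 = w * 10 + x.
    by apply/(prime_nt_dvdP P_prime) => //; rewrite dvdn_add ?dvdn_mull ?dvdn_gcdr ?dvdn_gcdl.
  have P_neq10 : w * 10 + x != 10 by apply: contraTneq P_prime => ->.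
  have := dvdn_leq (isT : 0 < 10) (dvdn_gcdr x 10); rewrite g_eq => P_le10.
  have := prime_gt1 P_prime; rewrite -digits_value_eq0; split; first apply/eqP; lia.
have s_coprime : all (coprime^~ 10) s.
  apply/allP => x s_x; apply/negPn/negP => x_ncop.
  have [/all_pred1P rest0 _] := rest_zero x s_x x_ncop.
  have s_0 : 0 \in s.
    by apply: (mem_rem (x := x)); rewrite rest0 mem_nseq size_rem // eqxx andbT ltn_predRL.
  by have [_] := rest_zero 0 s_0 isT.
apply/allP => x s_x.
by rewrite /= unit_digitsE ?(allP s_lt10) ?(allP s_coprime).
Qed.

Lemma perm_eq_count_mem (s t : seq nat) :
  (forall x : nat, count_mem x s = count_mem x t) -> perm_eq s t.
Proof. by move=> st; apply/allP => x _; rewrite /= st. Qed.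

Lemma count_le_perm_cat (m s : seq nat) :
  (forall x, count_mem x m <= count_mem x s) -> exists r, perm_eq s (r ++ m).
Proof.
elim: m s => [|x m IH] s le_ms; first by exists s; rewrite cats0.
have s_x : x \in s by rewrite -has_pred1 has_count; have := le_ms x; rewrite /= eqxx; lia.
have [r rem_r] : exists r, perm_eq (rem x s) (r ++ m).
  by apply: IH => y; have := le_ms y; rewrite (permP (perm_to_rem s_x)) /=; lia.
by exists r; rewrite (permPl (perm_to_rem s_x)) perm_sym -cat1s perm_catCA perm_cat2l perm_sym.
Qed.

Lemma perm_eq_nseq_rcons a b (s : seq nat) : a != b -> count_mem b s = 1 ->
  all (fun x => (x == a) || (x == b)) s -> perm_eq s (rcons (nseq (size s).-1 a) b).
Proof.
move=> ab b_once s_ab.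
have s_b : b \in s by rewrite -has_pred1 has_count b_once.
have rem_nb : b \notin rem b s.
  apply/count_memPn; have := permP (perm_to_rem s_b) (pred1 b).
  by rewrite /= eqxx b_once => -[].
rewrite perm_sym perm_rcons (permPr (perm_to_rem s_b)) perm_cons.
suff /all_pred1P -> : all (pred1 a) (rem b s) by rewrite size_rem.
apply/allP => x rem_x; have /orP[//|/eqP x_b] := allP s_ab x (mem_rem rem_x).
by move: rem_nb; rewrite -{1}x_b rem_x.
Qed.

Definition digit_mset c1 c3 c7 c9 := nseq c1 1 ++ nseq c3 3 ++ nseq c7 7 ++ nseq c9 9.

Definition capped_mset (s : seq nat) :=
  digit_mset (minn (count_mem 1 s) 6) (minn (count_mem 3 s) 6)
             (minn (count_mem 7 s) 6) (minn (count_mem 9 s) 6).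

Lemma count_capped_mset (s : seq nat) x : all (mem unit_digits) s ->
  count_mem x (capped_mset s) = minn (count_mem x s) 6.
Proof.
move=> s_units; rewrite !count_cat !count_nseq /=.
case: (boolP (x \in unit_digits)) => [|x_units].
  by rewrite !inE => /or4P[]/eqP-> /=; rewrite ?mul1n ?mul0n ?addn0 ?add0n.
have /count_memPn -> : x \notin s by apply: contra x_units => /(allP s_units).
move: x_units; rewrite !inE !negb_or => /and4P[].
by rewrite ![_ == x]eq_sym => /negPf-> /negPf-> /negPf-> /negPf->.
Qed.

Lemma mem_capped_mset (s : seq nat) : all (mem unit_digits) s -> capped_mset s =i s.
Proof.
move=> s_units x; rewrite -!has_pred1 !has_count count_capped_mset //.
by rewrite leq_min andbT.
Qed.

Definition near_repunit (sh : seq nat) :=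
  all (pred1 1) sh || has (fun a => has (fun b =>
    [&& a != b, count_mem b sh == 1 & all (fun x => (x == a) || (x == b)) sh])
    unit_digits) unit_digits.

Definition submset (m sh : seq nat) := all (fun x => count_mem x m <= count_mem x sh) m.

Fixpoint msets (ds : seq nat) k : seq (seq nat) :=
  if ds is d :: ds' then
    flatten [seq [seq nseq i d ++ m | m <- msets ds' (k - i)] | i <- iota 0 k.+1]
  else [:: [::]].

Definition covering_msets :=
  [seq m <- msets unit_digits 5 | covers 7 (iota 0 7) m].

(* Residue certificate for a multiset whose digits other than [d] are all known
   exactly: [j] copies of [d] are permuted together with them, and the remaining
   copies of [d] in front contribute a residue that is known exactly, or
   periodically when [d] occurs at least 6 times.  Capping the exponent in the
   size condition on [p] avoids building large unary numbers. *)
Definition tail_certificate sh d j p :=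
  let k := count_mem d sh in
  let m := nseq j d ++ filter (predC1 d) sh in
  if [&& j <= k, size m <= 7, p < 10 ^ (minn (size m) 3).-1 &
         all (fun x => (x == d) || (count_mem x sh < 6)) unit_digits] then
    if k < 6 then covers p [:: rep_residue p (k - j) d] m
    else (rep_residue p 6 d == 0) && covers p (period_residues p 6 d) m
  else false.

(* The [if] keeps [vm_compute] from evaluating the expensive tail certificates
   when a cheap certificate exists. *)
Definition certified sh :=
  if near_repunit sh || has (submset^~ sh) covering_msets then true
  else has (fun d => has (fun j => has (tail_certificate sh d j) [:: 3; 7; 13])
                          (iota 0 7)) unit_digits.

Lemma certified_digit_mset c1 c3 c7 c9 : c1 < 7 -> c3 < 7 -> c7 < 7 -> c9 < 7 ->
  certified (digit_mset c1 c3 c7 c9).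
Proof.
have all_certified : all (fun c1 => all (fun c3 => all (fun c7 => all (fun c9 =>
    certified (digit_mset c1 c3 c7 c9)) (iota 0 7)) (iota 0 7)) (iota 0 7)) (iota 0 7).
  by vm_compute.
move=> c1_lt c3_lt c7_lt c9_lt.
move/allP/(_ c1): all_certified; rewrite mem_iota => /(_ c1_lt)/allP/(_ c3).
rewrite mem_iota => /(_ c3_lt)/allP/(_ c7); rewrite mem_iota => /(_ c7_lt)/allP/(_ c9).
by rewrite mem_iota => /(_ c9_lt).
Qed.

Lemma certified_capped_mset s : certified (capped_mset s).
Proof. by apply: certified_digit_mset; rewrite ltnS geq_minr. Qed.

Lemma unit_digits_pos (s : seq nat) :
  all (mem unit_digits) s -> all (fun d => 0 < d) s.
Proof. by apply: sub_all => x; rewrite !inE => /or4P[]/eqP->. Qed.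

Lemma near_repunit_capped_mset (s : seq nat) : all (mem unit_digits) s ->
  near_repunit (capped_mset s) ->
  all (pred1 1) s \/ exists a b, [/\ a \in unit_digits, b \in unit_digits, a != b &
    perm_eq s (rcons (nseq (size s).-1 a) b)].
Proof.
move=> s_units; have same_all := eq_all_r (mem_capped_mset s_units).
case/orP => [ones|/hasP[a a_units /hasP[b b_units /and3P[ab b_once s_ab]]]].
  by left; rewrite -same_all.
right; exists a, b; split => //; apply: perm_eq_nseq_rcons => //; last by rewrite -same_all.
by move/eqP: b_once; rewrite count_capped_mset //; lia.
Qed.

Lemma covering_mset_contra (s m : seq nat) : perm_prime s ->
  all (mem unit_digits) s -> 2 <= size s ->
  m \in covering_msets -> submset m (capped_mset s) -> False.
Proof.
move=> s_prime s_units s_ge2; rewrite mem_filter => /andP[m_covers _] m_sub.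
have [r s_rm] : exists r, perm_eq s (r ++ m).
  apply: count_le_perm_cat => x; case: (boolP (x \in m)) => [m_x|/count_memPn-> //].
  by have := allP m_sub x m_x; rewrite count_capped_mset // leq_min => /andP[].
apply: (perm_prime_cover _ s_prime (unit_digits_pos s_units) _ s_rm _ m_covers) => //.
  by rewrite (leq_trans _ (leq_pexp2l _ (_ : 1 <= (size s).-1))) ?ltn_predRL.
by rewrite mem_iota ltn_mod.
Qed.

Lemma tail_certificate_contra (s : seq nat) d j p : perm_prime s ->
  all (mem unit_digits) s -> 1 < p -> tail_certificate (capped_mset s) d j p -> False.
Proof.
move=> s_prime s_units p_gt1; rewrite /tail_certificate.
set sh := capped_mset s; set k := count_mem d sh; set m := nseq j d ++ _.
have count_sh (x : nat) : count_mem x sh = minn (count_mem x s) 6 := count_capped_mset x s_units.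
case: ifP => // /and4P[j_le m_le7 p_small exact_sh] cert.
set r := nseq (count_mem d s - j) d.
have count_m (x : nat) : count_mem x (filter (predC1 d) sh) = (x != d) * count_mem x sh.
  rewrite count_filter; have [->|x_d] := eqVneq x d.
    by rewrite (eq_count (a2 := pred0)) ?count_pred0 // => y; rewrite /= andbN.
  by rewrite mul1n; apply: eq_count => y /=; case: (y =P x) => //= ->; rewrite x_d.
have s_rm : perm_eq s (r ++ m).
  apply: perm_eq_count_mem => x; rewrite !count_cat !count_nseq count_m /=.
  have [<-|x_d] := eqVneq d x.
    by move: j_le; rewrite /k count_sh /= mul0n; lia.
  rewrite !mul0n !add0n mul1n count_sh; apply/esym/minn_idPl/ltnW.
  case: (boolP (x \in unit_digits)) => [x_units|x_nunits].
    have := allP exact_sh x x_units; rewrite eq_sym (negPf x_d) count_sh.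
    by rewrite gtn_min ltnn orbF.
  suff /count_memPn -> : x \notin s by [].
  by apply: contra x_nunits => /(allP s_units).
have [U r_U m_covers] : exists2 U, digits_value r %% p \in U & covers p U m.
  move: cert; rewrite /r; case: ifP => [k_lt6|k_ge6].
    have k_eq : k = count_mem d s.
      by move: k_lt6; rewrite /k count_sh gtn_min ltnn orbF => /ltnW/minn_idPl.
    by exists [:: rep_residue p (k - j) d]; rewrite // inE rep_residueE k_eq.
  case/andP => /eqP period6 ?; exists (period_residues p 6 d) => //.
  by rewrite -rep_residueE rep_residue_period.
apply: (perm_prime_cover p_gt1 s_prime (unit_digits_pos s_units) _ s_rm r_U m_covers).
rewrite (perm_size s_rm) size_cat; apply: (leq_trans p_small); rewrite leq_pexp2l //.
lia.
Qed.

Lemma perm_prime_near_repunit (s : seq nat) : perm_prime s ->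
  all (fun d => d < 10) s -> 2 <= size s ->
  all (pred1 1) s \/ exists a b, [/\ a \in unit_digits, b \in unit_digits, a != b &
    perm_eq s (rcons (nseq (size s).-1 a) b)].
Proof.
move=> s_prime s_lt10 s_ge2.
have s_units := perm_prime_unit_digits s_prime s_lt10 s_ge2.
have := certified_capped_mset s; rewrite /certified.
case: ifP => [/orP[near|/hasP[m m_covering m_sub]] _|_].
- exact: near_repunit_capped_mset.
- by case: (covering_mset_contra s_prime s_units s_ge2 m_covering m_sub).
case/hasP => d _ /hasP[j _ /hasP[p p_mod tail]].
have p_gt1 : 1 < p by move: p_mod; rewrite !inE => /or3P[]/eqP->.
by case: (tail_certificate_contra s_prime s_units p_gt1 tail).
Qed.

Lemma unit_digit_bounds d : d \in unit_digits -> 0 < d < 10.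
Proof. by rewrite !inE => /or4P[]/eqP->. Qed.

Theorem theorem1 (N : nat) :
  absolute_prime N -> 2 <= size (digits N) ->
  N = repunit (size (digits N)) \/
  exists a b : nat, [/\ a \in [:: 1; 3; 7; 9], b \in [:: 1; 3; 7; 9], a != b &
    perm_eq (digits N) (digits (Bn (size (digits N)) a b))].
Proof.
move=> [_ N_prime] n_ge2.
have [ones|[a [b [a_units b_units ab N_perm]]]] :=
  perm_prime_near_repunit N_prime (digits_lt10 N) n_ge2.
  by move/all_pred1P: ones => ones; left; rewrite -{1}(digitsK N) {1}ones repunit_nseq.
right; exists a, b; split => //.
by rewrite digits_Bn ?unit_digit_bounds //; lia.
Qed.
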